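(* Let $M=(W,\bm{\Box},V)$ be a reflexive neighborhood model and $\Sigma$ a set of formulas closed under subformulas. Then the transitive filtration $M^{T}_f=(W_f,\bm{\Box}^{T}_f,V_f)$ of $M$ through $\Sigma$ is reflexive: $\bm{\Box}^{T}_fX\subseteq X$ for every $X\subseteq W_f$.
   Context: A neighborhood model is $M=(W,\bm{\Box},V)$ with $W\neq\varnothing$, $\bm{\Box}:\mathcal P(W)\to\mathcal P(W)$, $V:Var\to\mathcal P(W)$; truth sets: $|p|_M=V(p)$, $|\neg\varphi|_M=W\setminus|\varphi|_M$, $|\varphi\wedge\psi|_M=|\varphi|_M\cap|\psi|_M$, $|\Box\varphi|_M=\bm{\Box}|\varphi|_M$. $M$ is reflexive if $\bm{\Box}X\subseteq X$ for all $X\subseteq W$. For $\Sigma$ closed under subformulas, $w\sim v$ iff $w,v$ satisfy the same formulas of $\Sigma$; $\widetilde w$ is the class of $w$, $W_f=\{\widetilde w:w\in W\}$, $\widetilde X=\{\widetilde w:w\in X\}$, $V_f(p)=\widetilde{|p|}_M$. The minimal filtration has $\bm{\Box}^{-}_fX=\widetilde{|\Box\varphi|}_M$ if $X=\widetilde{|\varphi|}_M$ for some formula $\Box\varphi\in\Sigma$, and $\varnothing$ otherwise. For a function $\bm{\Box}':\mathcal P(U)\to\mathcal P(U)$, $\widehat{\bm{\Box}'}X=X$ if $X=\bm{\Box}'Y$ for some $Y\subseteq U$, and $\varnothing$ otherwise. The transitive filtration is $M^{T}_f=(W_f,\bm{\Box}^{T}_f,V_f)$ with $\bm{\Box}^{T}_fX=\bm{\Box}^{-}_fX\cup\widehat{\bm{\Box}^{-}_f}X$.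 *)

Set Implicit Arguments.

Inductive form : Type :=
  | Var : nat -> form
  | Neg : form -> form
  | And : form -> form -> form
  | Box : form -> form.

Record nbhd_model (W : Type) : Type := NbhdModel {
  mbox : (W -> Prop) -> (W -> Prop);
  mval : nat -> (W -> Prop)
}.

Fixpoint truth (W : Type) (M : nbhd_model W) (phi : form) : W -> Prop :=
  match phi with
  | Var p => mval M p
  | Neg psi => fun w => ~ truth M psi w
  | And psi chi => fun w => truth M psi w /\ truth M chi w
  | Box psi => mbox M (truth M psi)
  end.

Definition subset (T : Type) (X Y : T -> Prop) : Prop := forall x, X x -> Y x.

Definition reflexive_box (T : Type) (B : (T -> Prop) -> (T -> Prop)) : Prop :=
  forall X : T -> Prop, subset (B X) X.

Definition reflexive_model (W : Type) (M : nbhd_model W) : Prop :=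
  reflexive_box (mbox M).

Definition subformula_closed (Sigma : form -> Prop) : Prop :=
  (forall phi, Sigma (Neg phi) -> Sigma phi) /\
  (forall phi psi, Sigma (And phi psi) -> Sigma phi /\ Sigma psi) /\
  (forall phi, Sigma (Box phi) -> Sigma phi).

Section Filtration.
Variables (W : Type) (M : nbhd_model W) (Sigma : form -> Prop).

Definition sim (w v : W) : Prop :=
  forall phi, Sigma phi -> (truth M phi w <-> truth M phi v).

(* W_f : the set of equivalence classes (classes represented as subsets of W) *)
Definition Wf : Type := { C : W -> Prop | exists w, C = sim w }.

Definition cls (w : W) : Wf := exist _ (sim w) (ex_intro _ w eq_refl).

Definition img (X : W -> Prop) : Wf -> Prop :=
  fun c => exists w, X w /\ c = cls w.

Definition Vf (p : nat) : Wf -> Prop := img (mval M p).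

(* minimal filtration: box^-_f X = ~|Box phi| if X = ~|phi| with Box phi in Sigma,
   empty otherwise (well-defined, so written as a union over such phi) *)
Definition box_min (X : Wf -> Prop) : Wf -> Prop :=
  fun c => exists phi, Sigma (Box phi) /\ X = img (truth M phi)
                       /\ img (truth M (Box phi)) c.

End Filtration.

Definition hat (U : Type) (B : (U -> Prop) -> (U -> Prop)) (X : U -> Prop) : U -> Prop :=
  fun u => (exists Y, X = B Y) /\ X u.

Definition box_trans (W : Type) (M : nbhd_model W) (Sigma : form -> Prop)
  (X : Wf M Sigma -> Prop) : Wf M Sigma -> Prop :=
  fun c => box_min X c \/ hat (@box_min W M Sigma) X c.

Definition trans_filtration (W : Type) (M : nbhd_model W) (Sigma : form -> Prop)
  : nbhd_model (Wf M Sigma) :=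
  NbhdModel (@box_trans W M Sigma) (@Vf W M Sigma).

(* The minimal filtration sends [~|phi|] to [~|Box phi|], and reflexivity of [M]
   gives [|Box phi| ⊆ |phi|], hence [~|Box phi| ⊆ ~|phi|]; the hat of any
   function is reflexive by construction, and a union of reflexive functions is
   reflexive. *)

Set Implicit Arguments.

Lemma img_mono (W : Type) (M : nbhd_model W) (Sigma : form -> Prop)
  (X Y : W -> Prop) :
  subset X Y -> subset (@img W M Sigma X) (@img W M Sigma Y).
Proof.
  intros HXY c [w [Hw Hc]].
  exists w; split; [exact (HXY w Hw) | exact Hc].
Qed.

Lemma box_min_reflexive (W : Type) (M : nbhd_model W) (Sigma : form -> Prop) :
  reflexive_model M -> reflexive_box (@box_min W M Sigma).
Proof.
  intros HM X c [phi [_ [HX Hc]]].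
  rewrite HX.
  exact (img_mono (HM (truth M phi)) Hc).
Qed.

Lemma hat_reflexive (U : Type) (B : (U -> Prop) -> (U -> Prop)) :
  reflexive_box (hat B).
Proof.
  intros X u [_ Hu]; exact Hu.
Qed.

Lemma reflexive_box_union (U : Type) (B1 B2 : (U -> Prop) -> (U -> Prop)) :
  reflexive_box B1 -> reflexive_box B2 ->
  reflexive_box (fun X u => B1 X u \/ B2 X u).
Proof.
  intros H1 H2 X u [Hu | Hu]; [exact (H1 X u Hu) | exact (H2 X u Hu)].
Qed.

Theorem mainTheorem9 (W : Type) (HW : inhabited W) (M : nbhd_model W)
  (Sigma : form -> Prop) :
  reflexive_model M -> subformula_closed Sigma ->
  reflexive_model (trans_filtration M Sigma).
Proof.
  intros HM _.
  apply reflexive_box_union.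
  - exact (box_min_reflexive (Sigma := Sigma) HM).
  - apply hat_reflexive.
Qed.
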